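(* Let $\mu,\nu,\rho\in\mathbb{N}$ with $2\rho<\nu$ and $P(\mu+\nu)\le\rho$. Let $\mathcal E$ be the set of pairs $(m,n)\in\{q^{\mu-2},\dots,q^\mu-1\}\times\{q^{\nu-2},\dots,q^\nu-1\}$ for which there exists an integer $0\le k<q^{\mu+\rho}$ with $$f_P(mn+k)\overline{f_P(mn)}\ne f_P^{(\mu+2\rho)}(mn+k)\overline{f_P^{(\mu+2\rho)}(mn)}.$$ Then $\#\mathcal E\ll(\log q)\,q^{\mu+\nu-\rho+P(\mu+\nu+1)}$.
   Context: Fix an integer $q\ge2$. For an integer $n\ge0$, $\varepsilon_i(n)$ is the $i$-th digit of $n$ in base $q$ ($\varepsilon_0$ the units digit). For real $x>0$, $T_q(x)=\lfloor\log x/\log q\rfloor$. $e(x)=\exp(2\pi ix)$. $P:\mathbb{N}\to\mathbb{N}$ is a nondecreasing integer-valued function. For integers $x,y\ge0$, $a_P(x,y)=\sum_{i\ge0}\varepsilon_{i+P(y)}(x)\cdots\varepsilon_i(x)$. Fix $\alpha\in\mathbb{R}$; $f_P(x,y)=e(\alpha a_P(x,y))$ and $f_P(n)=f_P(n,T_q(n))$. For an integer $\rho\ge0$, $f_P^{(\rho)}(x,y)=f_P(x\bmod q^\rho,y)$ and $f_P^{(\rho)}(n)=f_P^{(\rho)}(n,T_q(n))$. The implied constant depends at most on $q$. *)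

From Stdlib Require Import Reals ZArith Arith List.
Open Scope R_scope.

Definition Cx : Type := (R * R)%type.
Definition Cmul (z w : Cx) : Cx :=
  (fst z * fst w - snd z * snd w, fst z * snd w + snd z * fst w).
Definition Cconj (z : Cx) : Cx := (fst z, - snd z).

Definition e (x : R) : Cx := (cos (2 * PI * x), sin (2 * PI * x)).

(* i-th digit of n in base q (eps_0 = units digit) *)
Definition digit (q i n : nat) : nat := ((n / q ^ i) mod q)%nat.

Definition Tq (q n : nat) : nat := Z.to_nat (Int_part (ln (INR n) / ln (INR q))).

Fixpoint sumn_lt (N : nat) (g : nat -> nat) : nat :=
  match N with
  | O => O
  | S N' => (sumn_lt N' g + g N')%nat
  end.

Fixpoint digit_prod (q x i L : nat) : nat :=
  match L with
  | O => digit q i x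
  | S L' => (digit_prod q x i L' * digit q (i + S L') x)%nat
  end.

(* a_P(x,y) = sum_{i >= 0} eps_{i+P(y)}(x) ... eps_i(x).
   Terms with i >= x vanish (since q^i > i, the digit eps_i(x) is 0 when
   q^i > x), so summing over i < x + 1 is the full (finite) sum. *)
Definition aP (q : nat) (P : nat -> nat) (x y : nat) : nat :=
  sumn_lt (S x) (fun i => digit_prod q x i (P y)).

Definition fP2 (q : nat) (P : nat -> nat) (alpha : R) (x y : nat) : Cx :=
  e (alpha * INR (aP q P x y)).
Definition fP (q : nat) (P : nat -> nat) (alpha : R) (n : nat) : Cx :=
  fP2 q P alpha n (Tq q n).

Definition fPr2 (q : nat) (P : nat -> nat) (alpha : R) (rho x y : nat) : Cx :=
  fP2 q P alpha (x mod q ^ rho)%nat y.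
Definition fPr (q : nat) (P : nat -> nat) (alpha : R) (rho n : nat) : Cx :=
  fPr2 q P alpha rho n (Tq q n).

Definition inE (q : nat) (P : nat -> nat) (alpha : R) (mu nu rho : nat)
  (mn : nat * nat) : Prop :=
  let m := fst mn in let n := snd mn in
  powerRZ (INR q) (Z.of_nat mu - 2) <= INR m /\ (m <= q ^ mu - 1)%nat /\
  powerRZ (INR q) (Z.of_nat nu - 2) <= INR n /\ (n <= q ^ nu - 1)%nat /\
  exists k : nat, (k < q ^ (mu + rho))%nat /\
    Cmul (fP q P alpha (m * n + k)) (Cconj (fP q P alpha (m * n)))
    <> Cmul (fPr q P alpha (mu + 2 * rho) (m * n + k))
            (Cconj (fPr q P alpha (mu + 2 * rho) (m * n))).

(* "#A <= B" for a set A of pairs: every duplicate-free list of elements of A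
   has length at most B. *)
Definition card_le (A : nat * nat -> Prop) (B : R) : Prop :=
  forall l : list (nat * nat), NoDup l -> (forall x, In x l -> A x) ->
    INR (length l) <= B.

From Stdlib Require Import Reals ZArith Arith List Lia Lra.
Open Scope R_scope.

(* Write x = m n. If (m, n) is exceptional for some k, the interval (x, x + k]
   contains a power of q (so that T_q changes) or a multiple of q^j with
   j = mu + 2 rho - P(mu + nu) (so that the digits above position j change).
   Otherwise every digit block of length P(T_q x) + 1 <= P(mu + nu) + 1 summed in
   a_P lies either below position mu + 2 rho, where reducing mod q^(mu + 2 rho) is
   invisible, or at positions >= j, where x and x + k agree and the truncated
   numbers vanish; hence both quotients coincide. There are O(q^(mu + nu - j))
   such crossing points y, and for fixed m and y the constraint
   m n < y <= m n + k < m n + q^(mu + rho) <= m n + q^(rho + 2) m leaves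
   O(q^(rho + 2)) values of n. This gives O(q^(mu + nu - rho + P(mu + nu))) pairs;
   the factor log q of the bound is absorbed into the q-dependent constant. *)

Lemma e_mul_conj a b : Cmul (e a) (Cconj (e b)) = e (a - b).
Proof.
  unfold Cmul, Cconj, e; simpl.
  replace (2 * PI * (a - b)) with (2 * PI * a - 2 * PI * b) by ring.
  rewrite cos_minus, sin_minus; f_equal; ring.
Qed.

Section Base.

Variable q : nat.
Hypothesis q_ge2 : (2 <= q)%nat.

Lemma pow_ge1 n : (1 <= q ^ n)%nat.
Proof. pose proof (Nat.pow_nonzero q n ltac:(lia)); lia. Qed.

Lemma digit_small d z : (z < q ^ d)%nat -> digit q d z = 0%nat.
Proof. intros; unfold digit; rewrite Nat.div_small by lia; apply Nat.Div0.mod_0_l. Qed.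

Lemma digit_mod_pow L d z : (d < L)%nat -> digit q d (z mod q ^ L) = digit q d z.
Proof.
  intros Hd; unfold digit.
  replace L with (d + S (L - d - 1))%nat by lia.
  rewrite Nat.pow_add_r, Nat.Div0.mod_mul_r, (Nat.mul_comm (q ^ d)), Nat.div_add
    by (pose proof (pow_ge1 d); lia).
  rewrite Nat.div_small by (apply Nat.mod_upper_bound; pose proof (pow_ge1 d); lia).
  rewrite Nat.pow_succ_r', Nat.add_0_l, Nat.Div0.mod_mul_r, (Nat.mul_comm q), Nat.Div0.mod_add.
  apply Nat.Div0.mod_mod.
Qed.

Lemma digit_mod_pow_high L d z : (L <= d)%nat -> digit q d (z mod q ^ L) = 0%nat.
Proof.
  intros Hd; apply digit_small.
  pose proof (Nat.mod_upper_bound z (q ^ L) ltac:(pose proof (pow_ge1 L); lia)).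
  pose proof (Nat.pow_le_mono_r q L d ltac:(lia) Hd); lia.
Qed.

Lemma digit_div_pow j d z : (j <= d)%nat -> digit q d z = digit q (d - j) (z / q ^ j).
Proof.
  intros; unfold digit; rewrite Nat.Div0.div_div, <- Nat.pow_add_r.
  do 3 f_equal; lia.
Qed.

Lemma digit_prod_eq0 z i L j :
  (j <= L)%nat -> digit q (i + j) z = 0%nat -> digit_prod q z i L = 0%nat.
Proof.
  induction L as [|L IHL]; intros Hj Hz; simpl.
  - now replace j with 0%nat in Hz by lia; rewrite Nat.add_0_r in Hz.
  - destruct (Nat.eq_dec j (S L)) as [->|]; [rewrite Hz | rewrite IHL by lia]; lia.
Qed.

Lemma eq_digit_prod z z' i L :
  (forall d, (i <= d <= i + L)%nat -> digit q d z = digit q d z') ->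
  digit_prod q z i L = digit_prod q z' i L.
Proof.
  induction L as [|L IHL]; intros Hzz'; simpl.
  - apply Hzz'; lia.
  - rewrite IHL, Hzz'; [reflexivity | lia | intros; apply Hzz'; lia].
Qed.

Lemma eq_sumn_lt N g h :
  (forall i, (i < N)%nat -> g i = h i) -> sumn_lt N g = sumn_lt N h.
Proof. induction N; intros Hgh; simpl; auto; rewrite IHN, Hgh; auto. Qed.

Lemma sumn_lt_add N g h :
  sumn_lt N (fun i => g i + h i)%nat = (sumn_lt N g + sumn_lt N h)%nat.
Proof. induction N; simpl; auto; rewrite IHN; lia. Qed.

Lemma aP_sumn_lt P x y N : (x < N)%nat ->
  aP q P x y = sumn_lt N (fun i => digit_prod q x i (P y)).
Proof.
  unfold aP; induction 1 as [|N HN IHN]; auto; rewrite IHN; simpl.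
  rewrite (digit_prod_eq0 x N (P y) 0); [lia | lia |].
  apply digit_small; rewrite Nat.add_0_r.
  pose proof (Nat.pow_gt_lin_r q N q_ge2); lia.
Qed.

Lemma aP_add_mod_pow P x z t L p : (P t <= p)%nat -> (p <= L)%nat ->
  (z / q ^ (L - p) = x / q ^ (L - p))%nat ->
  (aP q P z t + aP q P (x mod q ^ L) t =
   aP q P x t + aP q P (z mod q ^ L) t)%nat.
Proof.
  intros HPt HpL Hzx.
  assert (Hmod : forall w, (w mod q ^ L <= w)%nat) by (intro; apply Nat.Div0.mod_le).
  rewrite 4!(aP_sumn_lt P _ t (S (x + z))) by (pose proof (Hmod x); pose proof (Hmod z); lia).
  rewrite <- 2!sumn_lt_add; apply eq_sumn_lt; intros i _.
  destruct (Nat.lt_ge_cases (i + P t) L).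
  - rewrite (eq_digit_prod (x mod q ^ L) x), (eq_digit_prod (z mod q ^ L) z)
      by (intros; apply digit_mod_pow; lia).
    lia.
  - rewrite (digit_prod_eq0 (x mod q ^ L) i (P t) (P t)),
      (digit_prod_eq0 (z mod q ^ L) i (P t) (P t)) by (auto; apply digit_mod_pow_high; lia).
    rewrite (eq_digit_prod z x); [lia |].
    intros d Hd; rewrite 2!(digit_div_pow (L - p) d) by lia; congruence.
Qed.

Lemma Tq_eq t x : (q ^ t <= x < q ^ S t)%nat -> Tq q x = t.
Proof.
  intros [Hlo Hhi]; unfold Tq.
  assert (Hq : 1 < INR q) by (apply lt_1_INR; lia).
  assert (Hlnq : 0 < ln (INR q)) by (rewrite <- ln_1; apply ln_increasing; lra).
  assert (Hx : 0 < INR x) by (apply lt_0_INR; pose proof (pow_ge1 t); lia).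
  assert (Hpow : forall s, INR (q ^ s) = exp (INR s * ln (INR q)))
    by (intro; rewrite pow_INR, <- ln_pow by lra;
        rewrite exp_ln; [reflexivity | apply pow_lt; lra]).
  assert (Hlo' : INR t * ln (INR q) <= ln (INR x)).
  { apply Rnot_lt_le; intros Hlt; apply lt_INR in Hhi; apply le_INR in Hlo.
    rewrite Hpow in Hlo; apply exp_increasing in Hlt; rewrite exp_ln in Hlt; lra. }
  assert (Hhi' : ln (INR x) < (INR t + 1) * ln (INR q)).
  { apply lt_INR in Hhi; rewrite Hpow in Hhi.
    rewrite <- S_INR, <- (ln_exp (INR (S t) * ln (INR q))); now apply ln_increasing. }
  rewrite <- (Int_part_spec _ (Z.of_nat t)), Nat2Z.id; [reflexivity |].
  rewrite <- INR_IZR_INZ; split.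
  - apply Rmult_lt_reg_r with (ln (INR q)); auto.
    replace ((ln (INR x) / ln (INR q) - 1) * ln (INR q)) with (ln (INR x) - ln (INR q))
      by (field; lra); lra.
  - apply Rmult_le_reg_r with (ln (INR q)); auto.
    replace (ln (INR x) / ln (INR q) * ln (INR q)) with (ln (INR x)) by (field; lra); lra.
Qed.

Lemma exists_pow_bracket x : (1 <= x)%nat -> exists t, (q ^ t <= x < q ^ S t)%nat.
Proof.
  intros Hx.
  enough (Hbr : forall N, (x < q ^ N)%nat -> exists t, (q ^ t <= x < q ^ S t)%nat)
    by (apply (Hbr x), Nat.pow_gt_lin_r; lia).
  induction N as [|N IHN]; intros HxN; [simpl in HxN; lia |].
  destruct (Nat.lt_ge_cases x (q ^ N)) as [Hlt | Hge]; [now apply IHN | now exists N].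
Qed.

Lemma fP_mul_conj_mod_pow P alpha L p t x z :
  (P t <= p)%nat -> (p <= L)%nat -> (q ^ t <= x)%nat -> (x <= z < q ^ S t)%nat ->
  (z / q ^ (L - p) = x / q ^ (L - p))%nat ->
  Cmul (fP q P alpha z) (Cconj (fP q P alpha x))
  = Cmul (fPr q P alpha L z) (Cconj (fPr q P alpha L x)).
Proof.
  intros HPt HpL Hx Hz Hzx; unfold fPr, fP, fPr2, fP2.
  rewrite (Tq_eq t x), (Tq_eq t z) by lia.
  rewrite 2!e_mul_conj; f_equal.
  pose proof (f_equal INR (aP_add_mod_pow P x z t L p HPt HpL Hzx)) as Hsum.
  rewrite 2!plus_INR in Hsum; nra.
Qed.

(* Powers q^s with s in [N - 4, N] suffice, as q^(N - 4) <= m n < q^N. *)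
Definition crossing_points (N j : nat) : list nat :=
  map (fun c => c * q ^ j)%nat (seq 0 (2 * q ^ (N - j))) ++ map (Nat.pow q) (seq (N - 4) 5).

Lemma multiple_crossing N j x z : (j <= N)%nat -> (x / q ^ j < z / q ^ j)%nat ->
  (z < 2 * q ^ N)%nat -> exists y, In y (crossing_points N j) /\ (x < y <= z)%nat.
Proof.
  intros HjN Hxz HzN.
  pose proof (pow_ge1 j) as Hqj.
  pose proof (Nat.div_mod x (q ^ j) ltac:(lia)).
  pose proof (Nat.mod_upper_bound x (q ^ j) ltac:(lia)).
  pose proof (Nat.div_mod z (q ^ j) ltac:(lia)).
  assert (HqN : (q ^ N = q ^ (N - j) * q ^ j)%nat) by (rewrite <- Nat.pow_add_r; f_equal; lia).
  assert (Hy : ((x / q ^ j + 1) * q ^ j <= z)%nat) by nia.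
  exists ((x / q ^ j + 1) * q ^ j)%nat; split; [| split; nia].
  apply in_or_app; left; apply (in_map (fun c => c * q ^ j)%nat), in_seq; nia.
Qed.

Lemma power_crossing N j t x z : (q ^ t <= x)%nat -> (x < q ^ S t <= z)%nat ->
  (x < q ^ N)%nat -> (q ^ N <= x * q ^ 4)%nat ->
  exists y, In y (crossing_points N j) /\ (x < y <= z)%nat.
Proof.
  intros Htx [HxSt HStz] HxN HNx.
  assert (HtN : (t < N)%nat).
  { apply (Nat.pow_lt_mono_r_iff q); lia. }
  assert (HNt : (N < S t + 4)%nat).
  { apply (Nat.pow_lt_mono_r_iff q); [lia |]; rewrite Nat.pow_add_r; nia. }
  exists (q ^ S t)%nat; split; [| lia].
  apply in_or_app; right; apply in_map, in_seq; lia.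
Qed.

Lemma crossing_or_stable N j x z : (j <= N)%nat -> (1 <= x <= z)%nat ->
  (x < q ^ N)%nat -> (q ^ N <= x * q ^ 4)%nat -> (z < 2 * q ^ N)%nat ->
  (exists t, (t < N)%nat /\ (q ^ t <= x)%nat /\ (z < q ^ S t)%nat /\
             (z / q ^ j = x / q ^ j)%nat)
  \/ exists y, In y (crossing_points N j) /\ (x < y <= z)%nat.
Proof.
  intros HjN Hxz HxN HNx HzN.
  destruct (exists_pow_bracket x) as [t Ht]; [lia |].
  destruct (Nat.lt_ge_cases z (q ^ S t)) as [Hzt | Htz];
    [| right; apply (power_crossing N j t); lia].
  destruct (Nat.eq_dec (z / q ^ j) (x / q ^ j)) as [Heq | Hne].
  - left; exists t; repeat split; try lia.
    apply (Nat.pow_lt_mono_r_iff q); lia.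
  - right; apply multiple_crossing; auto.
    pose proof (Nat.Div0.div_le_mono x z (q ^ j) ltac:(lia)); lia.
Qed.

End Base.

Lemma pow_le_of_powerRZ_sub2 q a m : (2 <= q)%nat ->
  powerRZ (INR q) (Z.of_nat a - 2) <= INR m -> (q ^ a <= m * q ^ 2)%nat.
Proof.
  intros Hq Hm; apply INR_le.
  assert (Hq0 : INR q <> 0) by (apply not_0_INR; lia).
  assert (Hqa : INR (q ^ a) = powerRZ (INR q) (Z.of_nat a - 2) * INR q ^ 2).
  { rewrite pow_INR, !pow_powerRZ, <- powerRZ_add by auto; f_equal; lia. }
  rewrite Hqa, mult_INR, pow_INR; apply Rmult_le_compat_r; [apply pow_le, pos_INR | exact Hm].
Qed.

Lemma mem_window m n k y W B : (1 <= m)%nat -> (m * n < y <= m * n + k)%nat ->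
  (k < W <= B * m)%nat -> In n (seq ((y - W) / m) (B + 2)).
Proof.
  intros Hm Hy HkW; apply in_seq.
  pose proof (Nat.div_mod (y - W) m ltac:(lia)).
  pose proof (Nat.mod_upper_bound (y - W) m ltac:(lia)).
  split; nia.
Qed.

Definition candidate_pairs (q mu nu rho j : nat) : list (nat * nat) :=
  flat_map (fun m => flat_map (fun y =>
      map (pair m) (seq ((y - q ^ (mu + rho)) / m) (q ^ (rho + 2) + 2)))
    (crossing_points q (mu + nu) j)) (seq 0 (q ^ mu)).

Lemma exceptional_in_candidate_pairs q P alpha mu nu rho m n : (2 <= q)%nat ->
  (forall a b, (a <= b)%nat -> (P a <= P b)%nat) ->
  (2 * rho < nu)%nat -> (P (mu + nu) <= rho)%nat ->
  inE q P alpha mu nu rho (m, n) ->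
  In (m, n) (candidate_pairs q mu nu rho (mu + 2 * rho - P (mu + nu))%nat).
Proof.
  intros Hq Hmono Hnu Hp (Hm_lo & Hm_hi & Hn_lo & Hn_hi & k & Hk & Hexc); cbn [fst snd] in *.
  apply pow_le_of_powerRZ_sub2 in Hm_lo, Hn_lo; auto.
  pose proof (pow_ge1 q Hq) as Hpow.
  pose proof (Hpow mu); pose proof (Hpow nu); pose proof (Hpow 2%nat).
  assert (Hmn : (m * n < q ^ (mu + nu))%nat) by (rewrite Nat.pow_add_r; nia).
  assert (Hmn4 : (q ^ (mu + nu) <= m * n * q ^ 4)%nat)
    by (rewrite Nat.pow_add_r, (Nat.pow_add_r q 2 2 : q ^ 4 = q ^ 2 * q ^ 2)%nat; nia).
  assert (HkN : (k < q ^ (mu + nu))%nat)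
    by (pose proof (Nat.pow_le_mono_r q (mu + rho) (mu + nu)); lia).
  destruct (crossing_or_stable q Hq (mu + nu) (mu + 2 * rho - P (mu + nu))
              (m * n) (m * n + k))%nat
    as [(t & HtN & Htx & Htz & Hdiv) | (y & Hy & Hxy)]; try nia.
  - exfalso; apply Hexc.
    apply (fP_mul_conj_mod_pow q Hq P alpha _ (P (mu + nu))%nat t);
      [apply Hmono | | | | exact Hdiv]; lia.
  - apply in_flat_map; exists m; split; [apply in_seq; nia |].
    apply in_flat_map; exists y; split; [exact Hy |].
    apply in_map, (mem_window m n k); [nia | lia |].
    split; [lia |]; rewrite !Nat.pow_add_r; nia.
Qed.

Lemma length_candidate_pairs q mu nu rho j :
  length (candidate_pairs q mu nu rho j)
  = (q ^ mu * ((2 * q ^ (mu + nu - j) + 5) * (q ^ (rho + 2) + 2)))%nat.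
Proof.
  unfold candidate_pairs.
  rewrite (flat_map_constant_length
             (c := ((2 * q ^ (mu + nu - j) + 5) * (q ^ (rho + 2) + 2))%nat)),
    length_seq; [reflexivity |].
  intros m _; rewrite (flat_map_constant_length (c := (q ^ (rho + 2) + 2)%nat)).
  - unfold crossing_points; rewrite length_app, 2!length_map, 2!length_seq; reflexivity.
  - intros y _; rewrite length_map, length_seq; reflexivity.
Qed.

Lemma length_candidate_pairs_le q mu nu rho p : (2 <= q)%nat ->
  (2 * rho < nu)%nat -> (p <= rho)%nat ->
  (length (candidate_pairs q mu nu rho (mu + 2 * rho - p))
   <= 21 * q ^ 2 * q ^ (mu + nu - rho + p))%nat.
Proof.
  intros Hq Hnu Hp; rewrite length_candidate_pairs.
  pose proof (pow_ge1 q Hq) as Hpow.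
  pose proof (Hpow mu); pose proof (Hpow rho); pose proof (Hpow 2%nat).
  pose proof (Hpow (mu + nu - (mu + 2 * rho - p)))%nat.
  assert (Habc : (q ^ mu * q ^ (mu + nu - (mu + 2 * rho - p)) * q ^ rho
                  = q ^ (mu + nu - rho + p))%nat)
    by (rewrite <- 2!Nat.pow_add_r; f_equal; lia).
  assert (Hac : (q ^ mu * q ^ rho <= q ^ (mu + nu - rho + p))%nat)
    by (rewrite <- Nat.pow_add_r; apply Nat.pow_le_mono_r; lia).
  rewrite Nat.pow_add_r; nia.
Qed.

Theorem mainTheorem9 :
  forall q : nat, (2 <= q)%nat ->
  exists C : R, 0 < C /\
  forall (P : nat -> nat) (alpha : R) (mu nu rho : nat),
    (forall a b, (a <= b)%nat -> (P a <= P b)%nat) ->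
    (2 * rho < nu)%nat ->
    (P (mu + nu) <= rho)%nat ->
    card_le (inE q P alpha mu nu rho)
      (C * ln (INR q) * INR q ^ (mu + nu - rho + P (mu + nu + 1))%nat).
Proof.
  intros q Hq.
  assert (Hlnq : 0 < ln (INR q))
    by (rewrite <- ln_1; apply ln_increasing; [lra | apply lt_1_INR; lia]).
  exists (21 * INR q ^ 2 / ln (INR q)); split.
  { apply Rdiv_lt_0_compat; [| exact Hlnq].
    apply Rmult_lt_0_compat; [lra | apply pow_lt, lt_0_INR; lia]. }
  intros P alpha mu nu rho Hmono Hnu Hp l Hnodup Hl.
  assert (Hincl : incl l (candidate_pairs q mu nu rho (mu + 2 * rho - P (mu + nu))%nat))
    by (intros [m n] Hmn; apply (exceptional_in_candidate_pairs q P alpha); auto).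
  assert (Hlen : (length l <= 21 * q ^ 2 * q ^ (mu + nu - rho + P (mu + nu + 1)))%nat).
  { eapply Nat.le_trans; [exact (NoDup_incl_length Hnodup Hincl) |].
    eapply Nat.le_trans; [apply length_candidate_pairs_le; auto |].
    apply Nat.mul_le_mono_l, Nat.pow_le_mono_r; [lia |].
    pose proof (Hmono (mu + nu) (mu + nu + 1))%nat; lia. }
  apply le_INR in Hlen; rewrite 2!mult_INR, 2!pow_INR in Hlen.
  replace (21 * INR q ^ 2 / ln (INR q) * ln (INR q)) with (INR 21 * INR q ^ 2)
    by (simpl; field; lra).
  exact Hlen.
Qed.
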